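(* Let $p$ be an odd prime, $\zeta$ a primitive $p$-th root of unity, $K=\mathbf{Q}_p(\zeta)$, $K^+=\mathbf{Q}_p(\zeta+\zeta^{-1})$, $\mathfrak{o}=\mathbf{Z}_p[\zeta]$, $\pi=1-\zeta$, and $U_n=\{\alpha\in\mathfrak{o}^\times:\alpha\equiv1\pmod{\pi^n}\}$ for $n>0$. If $\alpha\in U_{p-1}\cap K^+$ and $N_{K|\mathbf{Q}_p}(\alpha)\equiv1\pmod{p\pi}$, then $\alpha\in U_{p+1}$ (and in particular $\alpha\in\mathfrak{o}^{\times p}$). *)

(* Model of o = Z_p[zeta] as the inverse limit  lim_k Z[x]/(p^k, Phi_p(x)),
   i.e. an element of o is a compatible sequence (a k)_k of integer polynomials,
   a k being a representative of the element modulo p^k (zeta = class of x). *)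
From HB Require Import structures.
From mathcomp Require Import all_boot all_order all_algebra.
Set Implicit Arguments. Unset Strict Implicit. Unset Printing Implicit Defensive.
Import Order.TTheory GRing.Theory Num.Theory.
Local Open Scope ring_scope.

Definition Phi (p : nat) : {poly int} := \sum_(i < p) 'X^i.

Definition piZ : {poly int} := 1 - 'X.

(* f = h modulo the ideal (g, p^k, Phi_p) of Z[x]: i.e. f = h mod g in Z[zeta]/p^k *)
Definition congr_at (p k : nat) (g f h : {poly int}) : Prop :=
  exists a b c : {poly int},
    f - h = a * g + b * ((p ^ k)%N%:R : int)%:P + c * Phi p.

Definition is_elt (p : nat) (a : nat -> {poly int}) : Prop :=
  forall k, congr_at p k 0 (a k.+1) (a k).

Definition oeq (p : nat) (a b : nat -> {poly int}) : Prop :=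
  forall k, congr_at p k 0 (a k) (b k).

Definition ocong (p : nat) (g : {poly int}) (a b : nat -> {poly int}) : Prop :=
  forall k, congr_at p k g (a k) (b k).

Definition ounit (p : nat) (a : nat -> {poly int}) : Prop :=
  exists b, is_elt p b /\ oeq p (fun k => a k * b k) (fun _ => 1).

Definition inU (p n : nat) (a : nat -> {poly int}) : Prop :=
  ounit p a /\ ocong p (piZ ^+ n) a (fun _ => 1).

(* alpha in K^+ = Q_p(zeta + zeta^-1): alpha fixed by the automorphism
   zeta |-> zeta^-1 = zeta^(p-1) generating Gal(K|K^+) *)
Definition inKplus (p : nat) (a : nat -> {poly int}) : Prop :=
  oeq p (fun k => a k \Po 'X^(p.-1)) a.

(* N_{K|Q_p}(alpha) = prod_{j=1}^{p-1} sigma_j(alpha), sigma_j : zeta |-> zeta^j *)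
Definition normK (p : nat) (a : nat -> {poly int}) : nat -> {poly int} :=
  fun k => \prod_(1 <= j < p) (a k \Po 'X^j).

From HB Require Import structures.
From mathcomp Require Import all_boot all_order all_algebra ring zify.
From Stdlib Require Import ClassicalEpsilon.
Import Order.TTheory GRing.Theory Num.Theory.
Set Implicit Arguments. Unset Strict Implicit. Unset Printing Implicit Defensive.
Local Open Scope ring_scope.

(* Write alpha = 1 + pi^(p-1) y.  Since (1 - zeta^j) / (1 - zeta) = j mod pi and
   j^(p-1) = 1 mod p, every conjugate sigma_j(alpha) is 1 + pi^(p-1) y mod pi^p, so
   N(alpha) = 1 - pi^(p-1) y mod pi^p; as p pi and pi^p generate the same ideal, the
   norm condition gives pi | y, i.e. alpha is in U_p.  Writing alpha = 1 + pi^p w,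
   the conjugation zeta |-> zeta^-1 multiplies pi^p by (-1)^p = -1 modulo pi^(p+1),
   and it fixes alpha, so 2 w = 0 mod pi and alpha is in U_(p+1).
   Finally (beta + pi^m c)^p = beta^p - pi^(m+p-1) c mod pi^(m+p) for beta = 1 mod pi
   and m >= 2; this gives successive approximations of a p-th root of any element of
   U_(p+1), unique modulo pi^2, so the roots found modulo each p^k form an element of o. *)

Section Ideal3.
Variable R : comPzRingType.
Implicit Types u v w f g c : R.

Definition ideal3 u v w f := exists a b c, f = a * u + b * v + c * w.

Lemma ideal3_0 u v w : ideal3 u v w 0.
Proof. by exists 0, 0, 0; rewrite !mul0r !addr0. Qed.

Lemma ideal3_gen1 u v w c : ideal3 u v w (c * u).
Proof. by exists c, 0, 0; rewrite !mul0r !addr0. Qed.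

Lemma ideal3_gen2 u v w c : ideal3 u v w (c * v).
Proof. by exists 0, c, 0; rewrite !mul0r add0r addr0. Qed.

Lemma ideal3_gen3 u v w c : ideal3 u v w (c * w).
Proof. by exists 0, 0, c; rewrite !mul0r !add0r. Qed.

Lemma ideal3_mem1 u v w : ideal3 u v w u.
Proof. by rewrite -[X in ideal3 _ _ _ X]mul1r; apply: ideal3_gen1. Qed.

Lemma ideal3_mem2 u v w : ideal3 u v w v.
Proof. by rewrite -[X in ideal3 _ _ _ X]mul1r; apply: ideal3_gen2. Qed.

Lemma ideal3_mem3 u v w : ideal3 u v w w.
Proof. by rewrite -[X in ideal3 _ _ _ X]mul1r; apply: ideal3_gen3. Qed.

Lemma ideal3D u v w f g : ideal3 u v w f -> ideal3 u v w g -> ideal3 u v w (f + g).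
Proof.
move=> [a [b [c ->]]] [a' [b' [c' ->]]].
by exists (a + a'), (b + b'), (c + c'); ring.
Qed.

Lemma ideal3Ml u v w c f : ideal3 u v w f -> ideal3 u v w (c * f).
Proof. by move=> [a [b [d ->]]]; exists (c * a), (c * b), (c * d); ring. Qed.

Lemma ideal3N u v w f : ideal3 u v w f -> ideal3 u v w (- f).
Proof. by rewrite -mulN1r; apply: ideal3Ml. Qed.

Lemma ideal3B u v w f g : ideal3 u v w f -> ideal3 u v w g -> ideal3 u v w (f - g).
Proof. by move=> hf /ideal3N; apply: ideal3D. Qed.

Lemma ideal3_sum u v w (I : Type) (r : seq I) (P : pred I) (F : I -> R) :
  (forall i, P i -> ideal3 u v w (F i)) -> ideal3 u v w (\sum_(i <- r | P i) F i).
Proof. by move=> hF; apply: big_ind => //; [apply: ideal3_0 | apply: ideal3D]. Qed.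

Lemma ideal3_subset u v w u' v' w' f :
  ideal3 u' v' w' u -> ideal3 u' v' w' v -> ideal3 u' v' w' w ->
  ideal3 u v w f -> ideal3 u' v' w' f.
Proof.
move=> hu hv hw [a [b [c ->]]].
by apply: ideal3D; [apply: ideal3D|]; apply: ideal3Ml.
Qed.

Lemma ideal3M u u' v w f f' :
  ideal3 u v w f -> ideal3 u' v w f' -> ideal3 (u * u') v w (f * f').
Proof.
move=> [a [b [c ->]]] [a' [b' [c' ->]]].
exists (a * a'), (b * (a' * u' + b' * v + c' * w) + a * u * b'),
       (c * (a' * u' + b' * v + c' * w) + a * u * c'); ring.
Qed.

Lemma ideal3X u v w f n : ideal3 u v w f -> ideal3 (u ^+ n) v w (f ^+ n).
Proof.
move=> hf; elim: n => [|n IH].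
  by rewrite !expr0; exists 1, 0, 0; rewrite !mul0r !addr0 mulr1.
by rewrite !exprS; apply: ideal3M.
Qed.

End Ideal3.

Local Notation pcst p := ((p%:R : int)%:P).
Local Notation pkcst p k := (((p ^ k)%N%:R : int)%:P).

Local Notation modideal p k g := (ideal3 g (pkcst p k) (Phi p)).

(* Divisibility in Z[zeta] = Z[X]/(Phi p). *)
Local Notation cyc_dvd p g := (ideal3 g 0 (Phi p)).

Lemma cyc_dvd_modideal p k g f : cyc_dvd p g f -> modideal p k g f.
Proof. exact: ideal3_subset (ideal3_mem1 _ _ _) (ideal3_0 _ _ _) (ideal3_mem3 _ _ _). Qed.

Lemma cyc_dvd_piX p m n : (m <= n)%N -> cyc_dvd p (piZ ^+ m) (piZ ^+ n).
Proof. by move=> hmn; rewrite -(subnK hmn) exprD; apply: ideal3_gen1. Qed.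

Section Congruence.
Variables (p k : nat) (g : {poly int}).
Implicit Types f h l : {poly int}.

Lemma congrE f h : congr_at p k g f h <-> modideal p k g (f - h).
Proof. by []. Qed.

Lemma congr_sub0 f h : congr_at p k g f h -> congr_at p k g (f - h) 0.
Proof. by rewrite !congrE subr0. Qed.

Lemma congr_from_sub0 f h : congr_at p k g (f - h) 0 -> congr_at p k g f h.
Proof. by rewrite !congrE subr0. Qed.

Lemma congr_refl f : congr_at p k g f f.
Proof. by apply/congrE; rewrite subrr; apply: ideal3_0. Qed.

Lemma congr_sym f h : congr_at p k g f h -> congr_at p k g h f.
Proof. by move/congrE/ideal3N; rewrite opprB. Qed.

Lemma congr_trans f h l : congr_at p k g f h -> congr_at p k g h l -> congr_at p k g f l.
Proof.
by move=> /congrE H1 /congrE H2; apply/congrE; rewrite -(subrKA h); apply: ideal3D.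
Qed.

Lemma congrD f1 h1 f2 h2 : congr_at p k g f1 h1 -> congr_at p k g f2 h2 ->
  congr_at p k g (f1 + f2) (h1 + h2).
Proof. by move=> /congrE H1 /congrE H2; apply/congrE; rewrite opprD addrACA; apply: ideal3D. Qed.

Lemma congrN f h : congr_at p k g f h -> congr_at p k g (- f) (- h).
Proof. by move/congrE/ideal3N; rewrite opprD. Qed.

Lemma congrB f1 h1 f2 h2 : congr_at p k g f1 h1 -> congr_at p k g f2 h2 ->
  congr_at p k g (f1 - f2) (h1 - h2).
Proof. by move=> H1 /congrN; apply: congrD. Qed.

Lemma congrMl c f h : congr_at p k g f h -> congr_at p k g (c * f) (c * h).
Proof. by move/congrE/(ideal3Ml c); rewrite mulrBr. Qed.

Lemma congrM f1 h1 f2 h2 : congr_at p k g f1 h1 -> congr_at p k g f2 h2 ->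
  congr_at p k g (f1 * f2) (h1 * h2).
Proof.
move=> H1 /(congrMl f1) H2; apply: congr_trans H2 _.
by rewrite ![_ * h2]mulrC; apply: congrMl.
Qed.

Lemma congrX f h n : congr_at p k g f h -> congr_at p k g (f ^+ n) (h ^+ n).
Proof.
move=> H; elim: n => [|n IH]; first exact: congr_refl.
by rewrite !exprS; apply: congrM.
Qed.

Lemma congr_sum (I : eqType) (r : seq I) (F G : I -> {poly int}) :
  (forall i, i \in r -> congr_at p k g (F i) (G i)) ->
  congr_at p k g (\sum_(i <- r) F i) (\sum_(i <- r) G i).
Proof.
move=> hFG; rewrite big_seq [X in congr_at _ _ _ _ X]big_seq.
by apply: (big_ind2 (congr_at p k g)) => //; [apply: congr_refl | apply: congrD].
Qed.

Lemma congr_prod (I : eqType) (r : seq I) (F G : I -> {poly int}) :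
  (forall i, i \in r -> congr_at p k g (F i) (G i)) ->
  congr_at p k g (\prod_(i <- r) F i) (\prod_(i <- r) G i).
Proof.
move=> hFG; rewrite big_seq [X in congr_at _ _ _ _ X]big_seq.
by apply: (big_ind2 (congr_at p k g)) => //; [apply: congr_refl | apply: congrM].
Qed.

Lemma congr_gen c : congr_at p k g (c * g) 0.
Proof. by apply/congrE; rewrite subr0; apply: ideal3_gen1. Qed.

Lemma congr_mulg f h w : congr_at p k g f h -> congr_at p k (g * w) (f * w) (h * w).
Proof.
move=> [a [b [c e]]]; exists a, (b * w), (c * w).
by rewrite -mulrBl e; ring.
Qed.

End Congruence.

Lemma congr_dvd p k g g' f h :
  modideal p k g' g -> congr_at p k g f h -> congr_at p k g' f h.
Proof. by move=> hg /congrE; apply: ideal3_subset hg (ideal3_mem2 _ _ _) (ideal3_mem3 _ _ _). Qed.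

Lemma congr_mod0 p k g f h : congr_at p k 0 f h -> congr_at p k g f h.
Proof. by apply: congr_dvd; rewrite -(mul0r g); apply: ideal3_gen1. Qed.

Lemma congr_piX p k m n f h :
  (m <= n)%N -> congr_at p k (piZ ^+ n) f h -> congr_at p k (piZ ^+ m) f h.
Proof. by move=> hmn; apply: congr_dvd; apply: cyc_dvd_modideal; apply: cyc_dvd_piX. Qed.

Lemma congr_level p k k' g f h :
  (k <= k')%N -> congr_at p k' g f h -> congr_at p k g f h.
Proof.
move=> hk /congrE; apply: ideal3_subset; [exact: ideal3_mem1 | | exact: ideal3_mem3].
by rewrite -(subnK hk) expnD natrM polyCM; apply: ideal3_gen2.
Qed.

Lemma congr_level0 p g f h : congr_at p 0 g f h.
Proof. by apply/congrE; rewrite -[f - h]mulr1; apply: ideal3_gen2. Qed.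

Section Substitution.
Variable p : nat.
Hypothesis p_prime : prime p.

Lemma Phi_dvd_Xn_subX_mod n : exists q, 'X^n - 'X^(n %% p) = q * Phi p :> {poly int}.
Proof.
exists ('X^(n %% p) * ('X - 1) * \sum_(i < n %/ p) ('X^p) ^+ i).
rewrite {1}(divn_eq n p) exprD mulnC exprM -{2}['X^(n %% p)]mul1r -mulrBl.
by rewrite subrX1 (subrX1 'X p) /Phi; ring.
Qed.

Lemma mulmod_inj j (j_gt0 : (0 < j < p)%N) :
  injective (fun i : 'I_p => Ordinal (ltn_pmod (j * i) (prime_gt0 p_prime))).
Proof.
case/andP: j_gt0 => j_gt0 j_lt_p.
suff le_inj (i1 i2 : 'I_p) : (i1 <= i2)%N -> j * i1 = j * i2 %[mod p] -> i1 = i2.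
  move=> i1 i2 /(congr1 val) /= e12.
  by case: (leqP i1 i2) => [/le_inj->|/ltnW /le_inj->].
move=> le12 /eqP; rewrite eq_sym eqn_mod_dvd ?leq_mul2l ?le12 ?orbT // -mulnBr.
rewrite Gauss_dvdr; last by rewrite prime_coprime // gtnNdvd.
move=> hdvd; apply/val_inj/eqP; rewrite eqn_leq le12 -subn_eq0.
apply: contraLR hdvd; rewrite -lt0n => diff_gt0.
by rewrite gtnNdvd // (leq_ltn_trans (leq_subr _ _) (ltn_ord i2)).
Qed.

(* Phi(X^j) = sum_i X^(ij), and i |-> ij mod p permutes 'I_p. *)
Lemma Phi_comp_Xn j : (0 < j < p)%N -> exists q, Phi p \Po 'X^j = q * Phi p.
Proof.
move=> hj; pose h (i : 'I_p) := Ordinal (ltn_pmod (j * i) (prime_gt0 p_prime)).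
have -> : Phi p \Po 'X^j =
    \sum_(i < p) ('X^(j * i) - 'X^(h i)) + \sum_(i < p) 'X^(h i).
  rewrite /Phi -big_split /= raddf_sum.
  by apply: eq_bigr => i _; rewrite subrK exprM; apply: comp_Xn_poly.
have -> : \sum_(i < p) 'X^(h i) = Phi p.
  by rewrite /Phi [RHS](reindex_inj (mulmod_inj hj)).
have [q hq] : exists q, \sum_(i < p) ('X^(j * i) - 'X^(h i)) = q * Phi p.
  elim/big_rec: _ => [|i s _ [q ->]]; first by exists 0; rewrite mul0r.
  by have [r ->] := Phi_dvd_Xn_subX_mod (j * i); exists (r + q); rewrite mulrDl.
by exists (q + 1); rewrite hq mulrDl mul1r.
Qed.

Lemma congr_comp_Xn k g f h j : (0 < j < p)%N ->
  congr_at p k g f h -> congr_at p k (g \Po 'X^j) (f \Po 'X^j) (h \Po 'X^j).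
Proof.
move=> hj [a [b [c e]]]; have [q hq] := Phi_comp_Xn hj.
exists (a \Po 'X^j), (b \Po 'X^j), ((c \Po 'X^j) * q).
by rewrite -comp_polyB e !comp_polyD !comp_polyM comp_polyC hq mulrA.
Qed.

End Substitution.

Lemma piZE : piZ = - ('X - 1).
Proof. by rewrite /piZ opprB. Qed.

Lemma piZ_neq0 : piZ != 0.
Proof. by rewrite piZE oppr_eq0 -polyC1 polyXsubC_eq0. Qed.

Lemma piZ_horner1 : piZ.[1] = 0.
Proof. by rewrite /piZ !hornerE subrr. Qed.

Definition Xgeom (j : nat) : {poly int} := \sum_(i < j) 'X^i.

Lemma one_sub_Xn j : 1 - 'X^j = piZ * Xgeom j.
Proof. by rewrite /piZ /Xgeom -opprB subrX1 -mulNr opprB. Qed.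

Lemma horner_Xgeom j : (Xgeom j).[1] = j%:R.
Proof.
rewrite /Xgeom horner_sum.
by under eq_bigr do rewrite hornerXn expr1n; rewrite sumr_const card_ord.
Qed.

Lemma Phi_binomial p : Phi p = \sum_(i < p) ('X - 1) ^+ i *+ 'C(p, i.+1) :> {poly int}.
Proof.
apply: (@mulfI _ ('X - 1)); first by rewrite -polyC1 polyXsubC_eq0.
rewrite /Phi -subrX1 mulr_sumr -{1}['X](subrK 1) exprD1n big_ord_recl /=.
rewrite expr0 bin0 mulr1n addrC addKr.
by apply: eq_bigr => i _; rewrite exprS mulrnAr.
Qed.

(* Residues modulo pi are read off by evaluation at zeta = 1. *)
Lemma congr_pi_horner p k q1 q2 : q1.[1] = q2.[1] -> congr_at p k piZ q1 q2.
Proof.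
move=> e; have : root (q1 - q2) 1 by rewrite rootE hornerD hornerN e subrr.
case/factor_theorem => r hr; apply/congrE; rewrite hr.
by exists (- r), 0, 0; rewrite !mul0r !addr0 piZE polyC1 mulrNN.
Qed.

Lemma congr_pi_p p k : congr_at p k piZ (pcst p) 0.
Proof.
have Phi_pi : congr_at p k piZ (pcst p) (Phi p).
  by apply: congr_pi_horner; rewrite hornerC (horner_Xgeom p).
by apply: congr_trans Phi_pi _; apply/congrE; rewrite subr0; apply: ideal3_mem3.
Qed.

Lemma odd_prime_ge3 p : prime p -> odd p -> (3 <= p)%N.
Proof. by move=> p_prime p_odd; rewrite ltn_neqAle prime_gt1 // andbT; apply: contraTneq p_odd => <-. Qed.

Section Cyclotomic.
Variable p : nat.
Hypotheses (p_prime : prime p) (p_odd : odd p).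

Let p_gt0 : (0 < p)%N := prime_gt0 p_prime.
Let p_ge3 : (3 <= p)%N := odd_prime_ge3 p_prime p_odd.

(* The middle binomial coefficients C(p, i), 1 < i < p, are divisible by p,
   and the top term (X - 1)^(p-1) equals pi^(p-1) because p - 1 is even. *)
Lemma Phi_pi_expansion : exists T, Phi p = pcst p * (1 + piZ * T) + piZ ^+ p.-1.
Proof.
move: p_prime p_odd p_ge3; case: p => [|[|[|m]]] // pr_m op_m _.
have XpiZ : ('X - 1 : {poly int}) = - piZ by rewrite piZE opprK.
have top : ('X - 1) ^+ m.+2 *+ 'C(m.+3, m.+3) = piZ ^+ m.+2 :> {poly int}.
  by rewrite binn mulr1n XpiZ exprNn -signr_odd (negbTE (op_m : ~~ odd m.+2)) mul1r.
set T := \sum_(i < m.+1) (- piZ) ^+ i * - ('C(m.+3, i.+2) %/ m.+3)%:R.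
have middle : \sum_(i < m.+1) ('X - 1) ^+ lift ord0 (widen_ord (leqnSn m.+1) i)
      *+ 'C(m.+3, (lift ord0 (widen_ord (leqnSn m.+1) i)).+1) = m.+3%:R * (piZ * T) :> {poly int}.
  rewrite !mulr_sumr; apply: eq_bigr => i _.
  have -> : (lift ord0 (widen_ord (leqnSn m.+1) i) : nat) = i.+1 by [].
  have /divnK {1}<- : (m.+3 %| 'C(m.+3, i.+2))%N.
    by apply: prime_dvd_bin => //; rewrite ltn0Sn 2!ltnS ltn_ord.
  by rewrite XpiZ -mulr_natr natrM exprS; ring.
exists T; rewrite Phi_binomial big_ord_recl big_ord_recr expr0 bin1 middle top polyC_natr.
change (m.+3%:R + (m.+3%:R * (piZ * T) + piZ ^+ m.+2) =
        m.+3%:R * (1 + piZ * T) + piZ ^+ m.+2 :> {poly int}).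
by move: (piZ ^+ m.+2) => t; ring.
Qed.

(* With y = - pi T the expansion reads p (1 - y) = Phi - pi^(p-1), and
   p = p (1 - y) (1 + y + ... + y^(p-2)) + p y^(p-1). *)
Lemma cyc_dvd_p_piX : cyc_dvd p (piZ ^+ p.-1) (pcst p).
Proof.
have [T eT] := Phi_pi_expansion; set y := - (piZ * T).
set S := \sum_(i < p.-1) y ^+ i.
have geom : (1 + piZ * T) * S = 1 - y ^+ p.-1.
  have -> : 1 + piZ * T = - (y - 1) by rewrite /y opprB opprK addrC.
  by rewrite mulNr -subrX1 opprB.
have ypow : (-1) ^+ p.-1 * T ^+ p.-1 * piZ ^+ p.-1 = y ^+ p.-1.
  by rewrite /y [RHS]exprNn exprMn; ring.
exists (pcst p * ((-1) ^+ p.-1 * T ^+ p.-1) - S), 0, S.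
transitivity (pcst p * (y ^+ p.-1 + (1 + piZ * T) * S)).
  by rewrite geom addrC subrK mulr1.
by rewrite eT -ypow; ring.
Qed.

Lemma cyc_dvd_piX_p : cyc_dvd p (pcst p) (piZ ^+ p.-1).
Proof.
have [T eT] := Phi_pi_expansion.
by exists (- (1 + piZ * T)), 0, 1; rewrite eT; ring.
Qed.

Lemma cyc_dvd_pk_piX k : cyc_dvd p (piZ ^+ (p.-1 * k)) (pkcst p k).
Proof. by rewrite exprM natrX polyC_exp; exact: ideal3X k cyc_dvd_p_piX. Qed.

Lemma cyc_dvd_piX_pk k : cyc_dvd p (pkcst p k) (piZ ^+ (p.-1 * k)).
Proof. by rewrite exprM natrX polyC_exp; exact: ideal3X k cyc_dvd_piX_p. Qed.

Lemma modideal_piX k g n : (p.-1 * k <= n)%N -> modideal p k g (piZ ^+ n).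
Proof.
move=> hn; apply: ideal3_subset (ideal3_mem2 _ _ _) (ideal3_0 _ _ _) (ideal3_mem3 _ _ _) _.
apply: ideal3_subset (cyc_dvd_piX_pk k) (ideal3_0 _ _ _) (ideal3_mem3 _ _ _) _.
exact: cyc_dvd_piX.
Qed.

Lemma cyc_dvd_ppi_piX : cyc_dvd p (piZ ^+ p) (pcst p * piZ).
Proof.
have -> : piZ ^+ p = piZ ^+ p.-1 * piZ by rewrite -exprSr prednK.
exact: ideal3M cyc_dvd_p_piX (ideal3_mem1 _ _ _).
Qed.

Lemma congr_p_piX k : congr_at p k (piZ ^+ p) (pcst p) (- piZ ^+ p.-1).
Proof.
have [T eT] := Phi_pi_expansion.
apply/congrE; rewrite opprK.
have -> : pcst p + piZ ^+ p.-1 = 1 * Phi p - T * (pcst p * piZ) by rewrite eT; ring.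
apply: ideal3B; first exact: ideal3_gen3.
by apply: ideal3Ml; apply: cyc_dvd_modideal _ cyc_dvd_ppi_piX.
Qed.

(* Phi(1) = p != 0, so Phi is coprime to pi = 1 - X. *)
Lemma Phi_cancel_piX n G H : piZ ^+ n * G = H * Phi p -> exists H', G = H' * Phi p.
Proof.
elim: n G H => [|n IH] G H; first by rewrite expr0 mul1r => ->; exists H.
rewrite exprS -mulrA => e.
have /factor_theorem [r hr] : root H 1.
  have := congr1 (horner^~ 1) e.
  rewrite !hornerM piZ_horner1 mul0r (horner_Xgeom p) rootE => /esym/eqP.
  by rewrite mulf_eq0 pnatr_eq0 gtn_eqF // orbF.
apply: (IH _ (- r)); apply: (mulfI piZ_neq0).
by rewrite e hr piZE polyC1; ring.
Qed.

Lemma congr_pi_cancel k n A : (n < p.-1 * k)%N ->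
  congr_at p k (piZ ^+ n.+1) (piZ ^+ n * A) 0 -> congr_at p k piZ A 0.
Proof.
move=> hn /congrE; rewrite subr0 => -[a [b [c e]]].
have [u [v [w ev]]] := cyc_dvd_pk_piX k.
move: (p.-1 * k)%N hn ev => N hn ev.
have eN : piZ ^+ N = piZ ^+ n * piZ ^+ (N - n) by rewrite -exprD subnKC // ltnW.
have : piZ ^+ n * (A - a * piZ - b * u * piZ ^+ (N - n)) = (c + b * w) * Phi p.
  transitivity (piZ ^+ n * A - (a * piZ ^+ n.+1 + b * (u * piZ ^+ N))).
    by rewrite eN exprS; ring.
  by rewrite e ev exprS; ring.
case/Phi_cancel_piX => H eH.
have ePi : piZ ^+ (N - n) = piZ ^+ (N - n).-1 * piZ by rewrite -exprSr prednK // subn_gt0.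
apply/congrE; rewrite subr0; exists (a + b * u * piZ ^+ (N - n).-1), 0, H.
by rewrite -eH ePi; ring.
Qed.

End Cyclotomic.

Lemma congr_decomp p k n f h :
  congr_at p k (piZ ^+ n) f h -> exists y, congr_at p k 0 f (h + piZ ^+ n * y).
Proof.
move=> [y [b [c e]]]; exists y; exists 0, b, c.
by rewrite mul0r add0r opprD addrA e; ring.
Qed.

Lemma congr_pi_mulX p k n f :
  congr_at p k piZ f 0 -> congr_at p k (piZ ^+ n.+1) (piZ ^+ n * f) 0.
Proof. by move/(congr_mulg (piZ ^+ n)); rewrite -exprS mul0r mulrC. Qed.

Section PthRoots.
Variable p : nat.
Hypotheses (p_prime : prime p) (p_odd : odd p).

Let p_ge3 : (3 <= p)%N := odd_prime_ge3 p_prime p_odd.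

Lemma cyc_dvd_binomial_tail m i : (2 <= m)%N -> (2 <= i <= p)%N ->
  cyc_dvd p (piZ ^+ (m + p)) (piZ ^+ (m * i) *+ 'C(p, i)).
Proof.
move=> hm /andP [hi2 hip]; case: (ltnP i p) => [ltip|leip]; last first.
  have -> : i = p by apply/eqP; rewrite eqn_leq hip leip.
  by rewrite binn mulr1n; apply: cyc_dvd_piX; nia.
have /divnK <- : (p %| 'C(p, i))%N by apply: prime_dvd_bin; rewrite // (leq_trans _ hi2).
have -> : piZ ^+ (m * i) *+ ('C(p, i) %/ p * p) =
    ('C(p, i) %/ p)%:R * (pcst p * piZ ^+ (m * i)).
  by rewrite -mulr_natl natrM polyC_natr; move: (piZ ^+ _) => x; ring.
apply: ideal3Ml; apply: ideal3_subset _ (ideal3_0 _ _ _) (ideal3_mem3 _ _ _)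
  (ideal3M (cyc_dvd_p_piX p_prime p_odd) (ideal3_mem1 _ _ _)).
by rewrite -exprD; apply: cyc_dvd_piX; nia.
Qed.

(* p = -pi^(p-1) modulo pi^p turns the linear term of the binomial
   expansion into -pi^(m+p-1) c. *)
Lemma congr_binomial_linear k m beta c : congr_at p k piZ beta 1 ->
  congr_at p k (piZ ^+ (m + p)) (beta ^+ p.-1 * (piZ ^+ m * c) *+ p)
    (- piZ ^+ (m + p.-1) * c).
Proof.
move=> hbeta.
have e1 : congr_at p k (piZ ^+ (m + p)) (pcst p * piZ ^+ m) (- piZ ^+ p.-1 * piZ ^+ m).
  by rewrite addnC exprD; apply: congr_mulg; apply: congr_p_piX.
have e2 : congr_at p k (piZ ^+ (m + p)) (beta ^+ p.-1 * piZ ^+ (m + p.-1)) (1 * piZ ^+ (m + p.-1)).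
  have -> : (m + p = (m + p.-1).+1)%N by lia.
  by rewrite exprS; apply: congr_mulg; rewrite -(expr1n _ p.-1); apply: congrX.
have -> : beta ^+ p.-1 * (piZ ^+ m * c) *+ p = (pcst p * piZ ^+ m) * (beta ^+ p.-1 * c).
  by rewrite polyC_natr -mulr_natl; move: (piZ ^+ _) (beta ^+ _) => x y; ring.
apply: congr_trans (congrM e1 (congr_refl _ _ _ _)) _.
have -> : - piZ ^+ p.-1 * piZ ^+ m * (beta ^+ p.-1 * c) = - (beta ^+ p.-1 * piZ ^+ (m + p.-1)) * c.
  by rewrite addnC exprD; move: (piZ ^+ p.-1) (piZ ^+ m) (beta ^+ _) => x y z; ring.
by rewrite mul1r in e2; apply: congrM (congrN e2) (congr_refl _ _ _ _).
Qed.

Lemma congr_perturb_expp k m beta c : (2 <= m)%N -> congr_at p k piZ beta 1 ->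
  congr_at p k (piZ ^+ (m + p)) ((beta + piZ ^+ m * c) ^+ p)
    (beta ^+ p - piZ ^+ (m + p.-1) * c).
Proof.
move=> hm hbeta.
rewrite [(beta + _) ^+ _]exprDn.
rewrite -(big_mkord xpredT (fun i => beta ^+ (p - i) * (piZ ^+ m * c) ^+ i *+ 'C(p, i))).
rewrite (big_ltn (ltn0Sn _)) (big_ltn (_ : 1 < p.+1)%N); last by lia.
rewrite subn0 expr0 mulr1 bin0 mulr1n subn1 expr1 bin1 -mulNr.
rewrite -[X in congr_at _ _ _ _ X]addr0 -[X in congr_at _ _ _ _ X]addrA.
apply: congrD (congr_refl _ _ _ _) (congrD (congr_binomial_linear _ _ hbeta) _).
apply/congrE; rewrite subr0 big_seq.
apply: ideal3_sum => i; rewrite mem_index_iota => hi.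
have -> : beta ^+ (p - i) * (piZ ^+ m * c) ^+ i *+ 'C(p, i) =
    beta ^+ (p - i) * c ^+ i * (piZ ^+ (m * i) *+ 'C(p, i)).
  by rewrite exprMn -exprM mulrnAr [_ ^+ (m * i) * _]mulrC mulrA.
apply: ideal3Ml; apply: cyc_dvd_modideal.
by apply: cyc_dvd_binomial_tail => //; rewrite -ltnS.
Qed.

Lemma p_root_approx k alpha : congr_at p k (piZ ^+ p.+1) alpha 1 ->
  forall j, exists2 beta, congr_at p k (piZ ^+ 2) beta 1
    & congr_at p k (piZ ^+ (j.+2 + p.-1)) (beta ^+ p) alpha.
Proof.
move=> halpha; elim=> [|j [beta beta1 hbeta]].
  exists 1; first exact: congr_refl.
  by rewrite expr1n (_ : 2 + p.-1 = p.+1)%N; [apply: congr_sym | lia].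
have [d hd] := congr_decomp (congr_sym hbeta).
exists (beta + piZ ^+ j.+2 * - d).
  rewrite -[X in congr_at _ _ _ _ X]addr0; apply: congrD beta1 _.
  apply/congrE; rewrite subr0 mulrC; apply: ideal3Ml; apply: cyc_dvd_modideal.
  exact: cyc_dvd_piX.
have -> : (j.+3 + p.-1 = j.+2 + p)%N by lia.
apply: congr_trans (congr_perturb_expp _ _ _) _ => //.
  exact: (congr_piX (_ : 1 <= 2)%N beta1).
by rewrite mulrN opprK; apply: congr_sym; apply: congr_mod0 hd.
Qed.

Lemma p_root_exists k alpha : congr_at p k (piZ ^+ p.+1) alpha 1 ->
  exists2 beta, congr_at p k (piZ ^+ 2) beta 1 & congr_at p k 0 (beta ^+ p) alpha.
Proof.
move=> /p_root_approx /(_ (p.-1 * k)) [beta beta1 hbeta]; exists beta => //.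
by apply: congr_dvd hbeta; apply: (modideal_piX p_prime p_odd); lia.
Qed.

(* If gamma = beta + pi^n a, then gamma^p = beta^p - pi^(n+p-1) a mod pi^(n+p),
   so gamma^p = beta^p forces pi | a. *)
Lemma p_root_unique_step k n beta gamma :
  (2 <= n)%N -> (n + p <= p.-1 * k)%N -> congr_at p k piZ beta 1 ->
  congr_at p k 0 (gamma ^+ p) (beta ^+ p) ->
  congr_at p k (piZ ^+ n) gamma beta -> congr_at p k (piZ ^+ n.+1) gamma beta.
Proof.
move=> hn hnp beta1 hpow /congr_decomp [a ha].
have expand := congr_perturb_expp a hn beta1.
have chain : congr_at p k (piZ ^+ (n + p)) (beta ^+ p - piZ ^+ (n + p.-1) * a) (beta ^+ p).
  apply: congr_trans (congr_sym expand) _; apply: congr_mod0.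
  exact: congr_trans (congr_sym (congrX p ha)) hpow.
have a_pi : congr_at p k piZ a 0.
  apply: (congr_pi_cancel p_prime p_odd (n := n + p.-1)); first by lia.
  rewrite -(_ : n + p = (n + p.-1).+1)%N; last by lia.
  move/congr_sub0: chain; rewrite addrAC subrr add0r => /congrN.
  by rewrite opprK oppr0.
apply: congr_trans (congr_mod0 _ ha) _; rewrite -[X in congr_at _ _ _ _ X]addr0.
exact: congrD (congr_refl _ _ _ _) (congr_pi_mulX _ a_pi).
Qed.

Lemma p_root_unique k beta gamma :
  congr_at p k.+1 (piZ ^+ 2) beta 1 -> congr_at p k.+1 (piZ ^+ 2) gamma 1 ->
  congr_at p k.+1 0 (gamma ^+ p) (beta ^+ p) -> congr_at p k 0 gamma beta.
Proof.
move=> beta1 gamma1 hpow; case: k beta1 gamma1 hpow => [|k] beta1 gamma1 hpow.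
  exact: congr_level0.
have beta_pi : congr_at p k.+2 piZ beta 1 := congr_piX (isT : 1 <= 2)%N beta1.
have approx n : (2 <= n <= p.-1 * k.+1)%N -> congr_at p k.+2 (piZ ^+ n) gamma beta.
  elim: n => [|n IH] // /andP [hn hnN]; have [n_le1|n_gt1] := leqP n 1.
    by rewrite (_ : n.+1 = 2)%N; [apply: congr_trans gamma1 (congr_sym beta1) | lia].
  apply: (p_root_unique_step _ _ beta_pi hpow (IH _)); [lia | lia | apply/andP; split; lia].
apply: congr_dvd (congr_level (leqnSn _) (approx (p.-1 * k.+1)%N _)).
  exact: (modideal_piX p_prime p_odd).
by apply/andP; split => //; nia.
Qed.

End PthRoots.

Lemma horner_natr n (x : int) : (n%:R : {poly int}).[x] = n%:R.
Proof. by rewrite hornerMn -polyC1 hornerC. Qed.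

Lemma comp_one_add_piX n j y :
  (1 + piZ ^+ n * y) \Po 'X^j = 1 + piZ ^+ n * (Xgeom j ^+ n * (y \Po 'X^j)).
Proof.
rewrite comp_polyD comp_polyM rmorphXn /= -polyC1 comp_polyC polyC1.
rewrite /piZ comp_polyB -polyC1 comp_polyC polyC1 comp_polyX one_sub_Xn.
by rewrite exprMn mulrA.
Qed.

Lemma congr_prod_one_add p k g (r : seq nat) (z : nat -> {poly int}) :
  congr_at p k (g ^+ 2) (\prod_(j <- r) (1 + g * z j)) (1 + g * \sum_(j <- r) z j).
Proof.
elim: r => [|j r IH]; first by rewrite !big_nil mulr0 addr0; apply: congr_refl.
rewrite !big_cons; apply: congr_trans (congrMl _ IH) _; apply: congr_from_sub0.
set S := \sum_(i <- r) z i.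
have -> : (1 + g * z j) * (1 + g * S) - (1 + g * (z j + S)) = z j * S * g ^+ 2 by ring.
exact: congr_gen.
Qed.

Lemma congr_pi_natr_mod p k m : congr_at p k piZ m%:R (m %% p)%:R.
Proof.
have := congr_pi_p p k; rewrite polyC_natr => p_pi.
rewrite {1}(divn_eq m p) natrD natrM -[X in congr_at _ _ _ _ X]add0r.
by apply: congrD (congr_refl _ _ _ _); rewrite -(mulr0 (m %/ p)%:R); apply: congrMl.
Qed.

Lemma congr_pi_natr p k m n : m = n %[mod p] -> congr_at p k piZ m%:R n%:R.
Proof.
move=> e; apply: congr_trans (congr_pi_natr_mod _ _ m) _.
by rewrite e; apply: congr_sym; apply: congr_pi_natr_mod.
Qed.

(* A Bezout relation p | 1 + a n inverts n modulo pi. *)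
Lemma congr_pi_natr_cancel p k n w : (0 < p)%N -> coprime p n ->
  congr_at p k piZ (n%:R * w) 0 -> congr_at p k piZ w 0.
Proof.
move=> p_gt0 cop hnw; have [a _] := Bezoutl n p_gt0; rewrite (eqP cop) => hdvd.
have -> : w = (1 + a * n)%:R * w - a%:R * (n%:R * w) by rewrite natrD natrM; ring.
rewrite -[0]subr0; apply: congrB; last by rewrite -(mulr0 a%:R); apply: congrMl.
rewrite -(mul0r w); apply: congrM (congr_refl _ _ _ _).
by apply: congr_trans (congr_pi_natr_mod _ _ _) _; rewrite (eqP hdvd); apply: congr_refl.
Qed.

Section NormAndConjugation.
Variable p : nat.
Hypotheses (p_prime : prime p) (p_odd : odd p).

Let p_gt0 : (0 < p)%N := prime_gt0 p_prime.
Let p_ge3 : (3 <= p)%N := odd_prime_ge3 p_prime p_odd.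

Lemma coprime_lt j : (0 < j < p)%N -> coprime p j.
Proof. by case/andP=> j_gt0 j_lt_p; rewrite prime_coprime // gtnNdvd. Qed.

Lemma congr_pi_fermat k j : (0 < j < p)%N -> congr_at p k piZ (j ^ p.-1)%:R 1.
Proof.
move=> hj; apply: congr_from_sub0; apply: congr_pi_natr_cancel p_gt0 (coprime_lt hj) _.
rewrite mulrBr mulr1 -natrM -expnS prednK //.
by apply: congr_sub0; apply: congr_pi_natr; apply: fermat_little.
Qed.

Lemma congr_norm_expansion k y :
  congr_at p k (piZ ^+ p) (\prod_(1 <= j < p) ((1 + piZ ^+ p.-1 * y) \Po 'X^j))
    (1 + piZ ^+ p.-1 * \sum_(1 <= j < p) Xgeom j ^+ p.-1 * (y \Po 'X^j)).
Proof.
under eq_bigr do rewrite comp_one_add_piX.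
by apply: (congr_piX (n := p.-1 * 2)); [lia | rewrite exprM; apply: congr_prod_one_add].
Qed.

Lemma congr_pi_conj_sum k y :
  congr_at p k piZ (\sum_(1 <= j < p) Xgeom j ^+ p.-1 * (y \Po 'X^j)) ((p.-1)%:R * y).
Proof.
have -> : (p.-1)%:R * y = \sum_(1 <= j < p) y by rewrite sumr_const_nat subn1 mulr_natl.
apply: congr_sum => j; rewrite mem_index_iota => hj.
apply: (@congr_trans _ _ _ _ ((j ^ p.-1)%:R * y)).
  apply: congr_pi_horner.
  by rewrite !hornerM horner_exp horner_Xgeom horner_comp hornerXn expr1n horner_natr natrX.
by rewrite -[y in X in congr_at _ _ _ _ X]mul1r; apply: congrM (congr_pi_fermat _ hj) (congr_refl _ _ _ _).
Qed.

Lemma norm_lift_U k f : (2 <= k)%N -> congr_at p k (piZ ^+ p.-1) f 1 ->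
  congr_at p k (piZ ^+ p) (\prod_(1 <= j < p) (f \Po 'X^j)) 1 ->
  congr_at p k (piZ ^+ p) f 1.
Proof.
move=> hk /congr_decomp [y hy] hnorm.
pose S := \sum_(1 <= j < p) Xgeom j ^+ p.-1 * (y \Po 'X^j).
have hconj : congr_at p k 0 (\prod_(1 <= j < p) ((1 + piZ ^+ p.-1 * y) \Po 'X^j))
    (\prod_(1 <= j < p) (f \Po 'X^j)).
  apply: congr_prod => j; rewrite mem_index_iota => hj.
  by have := congr_comp_Xn p_prime hj (congr_sym hy); rewrite comp_poly0.
have hS : congr_at p k (piZ ^+ p.-1.+1) (piZ ^+ p.-1 * S) 0.
  rewrite prednK //.
  have := congr_trans (congr_sym (congr_norm_expansion k y)) (congr_trans (congr_mod0 _ hconj) hnorm).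
  by move/congr_sub0; rewrite addrAC subrr add0r.
have S_pi : congr_at p k piZ S 0 by apply: (congr_pi_cancel p_prime p_odd (n := p.-1)) hS; nia.
have y_pi : congr_at p k piZ y 0.
  apply: congr_pi_natr_cancel p_gt0 (coprime_lt (_ : 0 < p.-1 < p)%N) _; first by lia.
  exact: congr_trans (congr_sym (congr_pi_conj_sum k y)) S_pi.
apply: congr_trans (congr_mod0 _ hy) _; rewrite -[X in congr_at _ _ _ _ X]addr0.
apply: congrD; first exact: congr_refl.
by rewrite -[X in piZ ^+ X](prednK p_gt0); apply: congr_pi_mulX.
Qed.

Lemma conj_lift_U k f : (2 <= k)%N -> congr_at p k (piZ ^+ p) f 1 ->
  congr_at p k 0 (f \Po 'X^(p.-1)) f -> congr_at p k (piZ ^+ p.+1) f 1.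
Proof.
move=> hk /congr_decomp [w hw] hfix.
have hj : (0 < p.-1 < p)%N by lia.
pose A := Xgeom p.-1 ^+ p * (w \Po 'X^(p.-1)).
have hA : congr_at p k 0 (1 + piZ ^+ p * A) (1 + piZ ^+ p * w).
  have := congr_comp_Xn p_prime hj hw; rewrite comp_poly0 comp_one_add_piX => hc.
  exact: congr_trans (congr_sym hc) (congr_trans hfix hw).
have A_w : congr_at p k piZ (A - w) 0.
  apply: (congr_pi_cancel p_prime p_odd (n := p)); first by nia.
  move/(congr_mod0 (piZ ^+ p.+1))/congr_sub0: hA.
  by rewrite opprD addrACA subrr add0r -mulrBr.
have A_w' : congr_at p k piZ (A - w) ((p.-1 - 1)%:R * w).
  apply: (@congr_trans _ _ _ _ ((p.-1 ^ p)%:R * w - w)).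
    apply: congr_pi_horner; rewrite !hornerD !hornerN !hornerM horner_exp horner_Xgeom.
    by rewrite horner_comp hornerXn expr1n horner_natr natrX.
  rewrite natrB; last by lia.
  rewrite mulrBl mul1r; apply: congrB (congr_refl _ _ _ _).
  exact: congrM (congr_pi_natr k (fermat_little _ p_prime)) (congr_refl _ _ _ _).
have w_pi : congr_at p k piZ w 0.
  apply: congr_pi_natr_cancel p_gt0 (coprime_lt (_ : 0 < p.-1 - 1 < p)%N) _; first by lia.
  exact: congr_trans (congr_sym A_w') A_w.
apply: congr_trans (congr_mod0 _ hw) _; rewrite -[X in congr_at _ _ _ _ X]addr0.
apply: congrD; first exact: congr_refl.
exact: congr_pi_mulX w_pi.
Qed.

End NormAndConjugation.

Lemma elt_congr_level p a k j : is_elt p a -> congr_at p k 0 (a (j + k)%N) (a k).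
Proof.
move=> ha; elim: j => [|j IH]; first exact: congr_refl.
by apply: congr_trans IH; apply: congr_level (ha (j + k)%N); apply: leq_addl.
Qed.

Lemma ounit_of_root p a b : (0 < p)%N -> is_elt p b -> ounit p a ->
  oeq p (fun k => b k ^+ p) a -> ounit p b.
Proof.
move=> p_gt0 hb [e [he hae]] hroot; exists (fun k => b k ^+ p.-1 * e k); split.
  by move=> k; apply: congrM (congrX _ (hb k)) (he k).
move=> k /=; rewrite mulrA -exprS prednK //.
exact: congr_trans (congrM (hroot k) (congr_refl _ _ _ _)) (hae k).
Qed.

(* The roots beta_k of alpha_(k+1), chosen independently at each level, are
   compatible by uniqueness of the p-th root congruent to 1 mod pi^2. *)
Lemma p_root_seq p a : prime p -> odd p -> is_elt p a ->
  ocong p (piZ ^+ p.+1) a (fun _ => 1) ->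
  exists2 b, is_elt p b & oeq p (fun k => b k ^+ p) a.
Proof.
move=> p_prime p_odd ha a1.
have root k : {beta | congr_at p k.+1 (piZ ^+ 2) beta 1 /\
                      congr_at p k.+1 0 (beta ^+ p) (a k.+1)}.
  apply: constructive_indefinite_description.
  by have [beta] := p_root_exists p_prime p_odd (a1 k.+1); exists beta.
pose b k := sval (root k).
have b1 k : congr_at p k.+1 (piZ ^+ 2) (b k) 1 by case: (svalP (root k)).
have b_root k : congr_at p k.+1 0 (b k ^+ p) (a k.+1) by case: (svalP (root k)).
exists b => k.
  apply: (p_root_unique p_prime p_odd (b1 k) (congr_level (leqnSn _) (b1 k.+1))).
  have b_root' := congr_level (leqnSn _) (b_root k.+1).
  exact: congr_trans (congr_trans b_root' (ha k.+1)) (congr_sym (b_root k)).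
exact: congr_trans (congr_level (leqnSn k) (b_root k)) (ha k).
Qed.

Theorem mainTheorem7 (p : nat) (hp : prime p) (hodd : odd p)
  (a : nat -> {poly int}) (ha : is_elt p a)
  (hU : inU p p.-1 a) (hK : inKplus p a)
  (hN : ocong p ((p%:R : int)%:P * piZ) (normK p a) (fun _ => 1)) :
  inU p p.+1 a /\
  (exists b : nat -> {poly int},
     is_elt p b /\ ounit p b /\ oeq p (fun k => b k ^+ p) a).
Proof.
have [a_unit a_Up1] := hU.
have a_Up2 : ocong p (piZ ^+ p.+1) a (fun _ => 1).
  move=> k; apply: congr_trans (congr_mod0 _ (congr_sym (elt_congr_level k 2 ha))) _.
  apply: (congr_level (leq_addl 2 k)); apply: conj_lift_U (hK _) => //.
  apply: norm_lift_U (a_Up1 _) _ => //.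
  exact: congr_dvd (cyc_dvd_modideal _ (cyc_dvd_ppi_piX hp hodd)) (hN (2 + k)%N).
have [b hb b_root] := p_root_seq hp hodd ha a_Up2.
by split => //; exists b; split => //; split => //; apply: ounit_of_root (prime_gt0 hp) hb a_unit b_root.
Qed.
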